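(* Let $G$, $\rho'$, $\chi$, $d$, $v_1,v_2$, $\Phi_1,\Phi_2$, $V_1,V_2\subseteq L^2(G)$ and the $G$-linear unitary map $M:V_1\to V_2$ (extended by $0$ on $V_1^\perp$) be as follows: $G$ is a finite group, $\rho':G\to \mathrm{U}(\mathcal{H})$ is an irreducible unitary representation on a $d$-dimensional complex Hilbert space with character $\chi$, $v_1,v_2\in\mathcal{H}$ are nonzero, $\Phi_i=(\rho'(g)v_i)_{g\in G}$, and $V_i$ is the column space of the Gram matrix of $\Phi_i$. Let $\Pi_{V_i}$ denote the orthogonal projection of $L^2(G)$ onto $V_i$. For $a\in G$ let $\chi_a(g)=\chi(ga)$ and $A_{\chi,a}f=f*\overline{\chi_a}$ for $f\in L^2(G)$. Then for every $a\in G$ there is $\lambda_a\in\mathbb{C}$ such that $$\lambda_a Mf=\Pi_{V_2}A_{\chi,a}\Pi_{V_1}f\quad\text{for all }f\in L^2(G),$$ and $\lambda_a\neq 0$ for at least one $a\in G$.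
   Context: $L^2(G)$ is the space of functions $G\to\mathbb{C}$ with convolution $(f*h)(s)=\sum_{x\in G}f(x)h(x^{-1}s)$ and left regular representation $\rho(g)f=\delta_g*f$. The Gram matrix of $\Phi_i$ is $[\langle\rho'(g_2)v_i,\rho'(g_1)v_i\rangle]_{g_1,g_2\in G}$; its column space $V_i$ is invariant and irreducible under the left regular representation with character $\chi$. $M$ is $G$-linear: it commutes with $\rho(g)$ for all $g$. *)

From HB Require Import structures.
From mathcomp Require Import all_boot all_order all_algebra all_fingroup.
From mathcomp Require Import all_field all_character.
From Stdlib Require Import ClassicalEpsilon.
Set Implicit Arguments. Unset Strict Implicit. Unset Printing Implicit Defensive.
Import Order.TTheory GRing.Theory Num.Theory.
Local Open Scope ring_scope.
Local Open Scope group_scope.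

Definition L2 (gT : finGroupType) := {ffun gT -> algC}.

Definition L2dot (gT : finGroupType) (f h : L2 gT) : algC :=
  (\sum_(x : gT) f x * (h x)^*)%R.

Definition Hdot (d : nat) (x y : 'cV[algC]_d) : algC :=
  (\sum_(i < d) x i 0 * (y i 0)^*)%R.

Definition conv (gT : finGroupType) (f h : L2 gT) : L2 gT :=
  [ffun s : gT => (\sum_(x : gT) f x * h (x^-1 * s)%g)%R].

(* Left regular representation rho(g) f = delta_g * f, i.e. (rho(g) f)(s) = f(g^-1 s). *)
Definition delta (gT : finGroupType) (g : gT) : L2 gT :=
  [ffun x => if x == g then 1%R else 0%R].
Definition lreg (gT : finGroupType) (g : gT) (f : L2 gT) : L2 gT :=
  conv (delta g) f.

Definition rchar (gT : finGroupType) (d : nat)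
  (rG : mx_representation algC [set: gT] d) (g : gT) : algC := \tr (rG g).

(* Column g2 of the Gram matrix [<rho'(g2) v, rho'(g1) v>]_{g1,g2}, as a function of g1. *)
Definition gram_col (gT : finGroupType) (d : nat)
  (rG : mx_representation algC [set: gT] d) (v : 'cV[algC]_d) (g2 : gT) : L2 gT :=
  [ffun g1 => Hdot (rG g2 *m v) (rG g1 *m v)].

Definition gram_colspace (gT : finGroupType) (d : nat)
  (rG : mx_representation algC [set: gT] d) (v : 'cV[algC]_d) (f : L2 gT) : Prop :=
  exists c : gT -> algC, f = [ffun g1 => (\sum_(g2 : gT) c g2 * gram_col rG v g2 g1)%R].

Definition orth_to (gT : finGroupType) (V : L2 gT -> Prop) (f : L2 gT) : Prop :=
  forall w, V w -> L2dot f w = 0%R.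

Definition is_orthproj (gT : finGroupType) (V : L2 gT -> Prop) (f p : L2 gT) : Prop :=
  V p /\ orth_to V [ffun x => f x - p x]%R.

(* The orthogonal projection Pi_V (well defined for the finite-dimensional
   subspaces used here; chosen by the (unique) characterization). *)
Definition orthproj (gT : finGroupType) (V : L2 gT -> Prop) (f : L2 gT) : L2 gT :=
  epsilon (inhabits f) (fun p => is_orthproj V f p).

Definition Achi (gT : finGroupType) (chi : gT -> algC) (a : gT) (f : L2 gT) : L2 gT :=
  conv f [ffun g : gT => (chi (g * a)%g)^*%R].

From HB Require Import structures.
From mathcomp Require Import all_boot all_order all_algebra all_fingroup.
From mathcomp Require Import all_field all_character ring.
From Stdlib Require Import ClassicalEpsilon.
Import Order.TTheory GRing.Theory Num.Theory.
Set Implicit Arguments.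
Unset Strict Implicit.
Unset Printing Implicit Defensive.
Local Open Scope ring_scope.
Local Open Scope sesquilinear_scope.

(* Schur orthogonality for the irreducible unitary representation,
     sum_g <x, g v> conj <y, g u> = (|G|/d) <x, y> <u, v>,
   makes every map in the statement explicit in terms of
     cross v w f : g |-> sum_h f(h) <h v, g w>.
   The projection onto V_v is f |-> cross v v f / ((|G|/d) |v|^2), and the same
   relation together with its version for the character gives
     Pi_V2 A_(chi,a) Pi_V1 f = <v2, a v1> / (|v1|^2 |v2|^2) * cross v1 v2 f.
   On the other side, M is determined by its value on the element
   g |-> <v1, g v1> of V1, which reproduces V1 under the projection; by
   G-linearity and Schur orthogonality this value is mu (g |-> <v1, g v2>),
   with mu <> 0 because M is isometric on V1.  Hence M f is also a multiple
   of cross v1 v2 f, and the factor <v2, a v1> is nonzero for some a since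
   sum_a |<v2, a v1>|^2 = (|G|/d) |v1|^2 |v2|^2. *)

Lemma sum_mul_conjC_eq0 (I : finType) (F : I -> algC) :
  \sum_i F i * (F i)^* = 0 -> forall i, F i = 0.
Proof.
move=> /eqP; rewrite psumr_eq0 => [/allP F0 i|i _]; last exact: mul_conjC_ge0.
by apply/eqP; rewrite -mul_conjC_eq0; apply: F0; rewrite mem_index_enum.
Qed.

Lemma mul_delta_mx_entry n (A B : 'M[algC]_n) (j i k l : 'I_n) :
  (A *m delta_mx j i *m B) k l = A k j * B i l.
Proof.
rewrite -mulmxA mxE (bigD1 j) //= big1 ?addr0 => [|p /negbTE np].
  rewrite mxE (bigD1 i) //= mxE !eqxx mul1r big1 ?addr0 // => q /negbTE nq.
  by rewrite mxE nq andbF mul0r.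
by rewrite mxE big1 ?mulr0 // => q _; rewrite mxE np mul0r.
Qed.

Lemma mxtrace_delta n (j i : 'I_n) : \tr (delta_mx j i : 'M[algC]_n) = (j == i)%:R.
Proof.
rewrite /mxtrace (bigD1 j) //= mxE eqxx big1 ?addr0 ?(eq_sym i) // => k /negbTE nk.
by rewrite mxE nk.
Qed.

Lemma sumr_delta (I : finType) (l : I) (F : I -> algC) :
  \sum_k (k == l)%:R * F k = F l.
Proof.
rewrite (bigD1 l) //= eqxx mul1r big1 ?addr0 // => k /negbTE ->.
exact: mul0r.
Qed.

Section Hdot.
Variable d : nat.
Implicit Types x y : 'cV[algC]_d.

Lemma HdotE x y : Hdot x y = \tr (x *m y ^t*).
Proof.
by rewrite /Hdot /mxtrace; apply: eq_bigr => i _; rewrite !mxE big_ord1 !mxE.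
Qed.

Lemma conj_Hdot x y : (Hdot x y)^* = Hdot y x.
Proof.
rewrite /Hdot rmorph_sum; apply: eq_bigr => i _.
by rewrite rmorphM /= conjCK mulrC.
Qed.

Lemma Hdot_neq0 x : x != 0 -> Hdot x x != 0.
Proof.
apply: contraNneq => /sum_mul_conjC_eq0 x0; apply/eqP/matrixP => i j.
by rewrite (ord1 j) x0 mxE.
Qed.

Lemma Hdot_suml (I : finType) (c : I -> algC) (x : I -> 'cV[algC]_d) y :
  Hdot (\sum_i c i *: x i) y = \sum_i c i * Hdot (x i) y.
Proof.
rewrite HdotE mulmx_suml raddf_sum /=; apply: eq_bigr => i _.
by rewrite -scalemxAl mxtraceZ HdotE.
Qed.

End Hdot.

Section L2.
Variable gT : finGroupType.
Implicit Types f h p w : L2 gT.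

Lemma L2dot_eq0 f : L2dot f f = 0 -> f = [ffun => 0].
Proof. by move=> /sum_mul_conjC_eq0 f0; apply/ffunP => x; rewrite ffunE f0. Qed.

Lemma L2dotBl f h w : L2dot [ffun x => f x - h x] w = L2dot f w - L2dot h w.
Proof. by rewrite /L2dot -sumrB; apply: eq_bigr => x _; rewrite ffunE mulrBl. Qed.

Lemma natr_card_neq0 : (#|gT|%:R : algC) != 0.
Proof. by rewrite pnatr_eq0 -lt0n -cardsT (cardG_gt0 [set: gT]%G). Qed.

Lemma lregE g f s : lreg g f s = f (g^-1 * s)%g.
Proof.
rewrite ffunE (bigD1 g) //= ffunE eqxx mul1r big1 ?addr0 // => x /negbTE xg.
by rewrite ffunE xg mul0r.
Qed.

Section OrthProj.
Variable V : L2 gT -> Prop.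
Hypothesis V_sub : forall a b, V a -> V b -> V [ffun x => a x - b x].

Lemma orthproj_unique f p : is_orthproj V f p -> orthproj V f = p.
Proof.
move=> [Vp fp_orth].
have [Vq fq_orth] : is_orthproj V f (orthproj V f).
  exact: epsilon_spec (ex_intro _ p (conj Vp fp_orth)).
set q := orthproj V f in Vq fq_orth *.
have qp_eq : [ffun x => q x - p x] =
    [ffun x => [ffun x => f x - p x] x - [ffun x => f x - q x] x].
  by apply/ffunP => x; rewrite !ffunE; ring.
have /L2dot_eq0/ffunP qp0 : L2dot [ffun x => q x - p x] [ffun x => q x - p x] = 0.
  have Vqp := V_sub Vq Vp.
  by rewrite {1}qp_eq L2dotBl (fp_orth _ Vqp) (fq_orth _ Vqp) subrr.
by apply/ffunP => x; apply/eqP; rewrite -subr_eq0; have := qp0 x; rewrite !ffunE => ->.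
Qed.

Lemma orthproj_id f : V f -> orthproj V f = f.
Proof.
move=> Vf; apply: orthproj_unique; split=> // w _.
by rewrite /L2dot big1 // => x _; rewrite ffunE subrr mul0r.
Qed.

End OrthProj.

Section LinearMap.
Variable M : L2 gT -> L2 gT.
Hypothesis M_linear : forall c f h,
  M [ffun x => c * f x + h x] = [ffun x => c * M f x + M h x].

Lemma linear_ffun0 : M [ffun => 0] = [ffun => 0].
Proof.
have zeroE : [ffun x => -1 * [ffun => 0] x + [ffun => 0] x] = [ffun => 0] :> L2 gT.
  by apply/ffunP => x; rewrite !ffunE mulr0 addr0.
have := M_linear (-1) [ffun => 0] [ffun => 0]; rewrite zeroE => ->.
by apply/ffunP => x; rewrite !ffunE mulN1r addNr.
Qed.

Lemma linear_ffun_sum (I : Type) (r : seq I) (a : I -> algC) (F : I -> L2 gT) :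
  M [ffun g => \sum_(i <- r) a i * F i g] = [ffun s => \sum_(i <- r) a i * M (F i) s].
Proof.
elim: r => [|i r IHr].
  rewrite (_ : [ffun g => _] = [ffun => 0]) ?linear_ffun0;
    by apply/ffunP => g; rewrite !ffunE big_nil.
have -> : [ffun g => \sum_(j <- i :: r) a j * F j g] =
    [ffun g => a i * F i g + [ffun g => \sum_(j <- r) a j * F j g] g].
  by apply/ffunP => g; rewrite !ffunE big_cons.
by rewrite M_linear IHr; apply/ffunP => g; rewrite !ffunE big_cons.
Qed.

End LinearMap.

End L2.

Section Representation.
Variables (gT : finGroupType) (d : nat) (rG : mx_representation algC [set: gT] d).
Hypothesis rG_unitary : forall g, rG g \is unitarymx.

Lemma reprM g h : rG (g * h)%g = rG g *m rG h.
Proof. by rewrite repr_mxM ?inE. Qed.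

Lemma repr_adjoint g : (rG g)^t* = rG g^-1%g.
Proof. by rewrite -invmx_unitary // repr_mxV ?inE. Qed.

Lemma Hdot_repr_adjoint w z h : Hdot w (rG h^-1%g *m z) = Hdot (rG h *m w) z.
Proof.
rewrite !HdotE trmx_mul map_mxM repr_adjoint invgK.
by rewrite mulmxA mxtrace_mulC mulmxA.
Qed.

Lemma Hdot_reprE z v g : Hdot z (rG g *m v) = \tr (rG g^-1%g *m (z *m v^t*)).
Proof.
by rewrite HdotE trmx_mul map_mxM repr_adjoint mulmxA mxtrace_mulC.
Qed.

Local Notation N := (#|gT|%:R / d%:R : algC).

Definition mxcoef (v w : 'cV[algC]_d) : L2 gT := [ffun g => Hdot w (rG g *m v)].

Definition cross (v w : 'cV[algC]_d) (f : L2 gT) : L2 gT :=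
  [ffun g => \sum_h f h * Hdot (rG h *m v) (rG g *m w)].

Definition gram_proj (v : 'cV[algC]_d) (f : L2 gT) : L2 gT :=
  [ffun g => (N * Hdot v v)^-1 * cross v v f g].

Lemma gram_col_mxcoef v h : gram_col rG v h = mxcoef v (rG h *m v).
Proof. by []. Qed.

Lemma lreg_mxcoef v w h : lreg h (mxcoef v w) = mxcoef v (rG h *m w).
Proof.
by apply/ffunP => s; rewrite lregE !ffunE reprM -mulmxA Hdot_repr_adjoint.
Qed.

Lemma gram_colspace_mxcoef v f : gram_colspace rG v f -> exists w, f = mxcoef v w.
Proof.
move=> [c ->]; exists (\sum_g c g *: (rG g *m v)); apply/ffunP => s.
by rewrite !ffunE Hdot_suml; apply: eq_bigr => g _; rewrite ffunE.
Qed.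

Lemma gram_colspaceB v a b : gram_colspace rG v a -> gram_colspace rG v b ->
  gram_colspace rG v [ffun x => a x - b x].
Proof.
move=> [ca ->] [cb ->]; exists (fun g => ca g - cb g); apply/ffunP => x.
by rewrite !ffunE -sumrB; apply: eq_bigr => g _; rewrite mulrBl.
Qed.

Lemma gram_colspace_gram_col v h : gram_colspace rG v (gram_col rG v h).
Proof.
exists (fun g => (g == h)%:R); apply/ffunP => s; rewrite [in RHS]ffunE.
exact/esym/(sumr_delta h (fun g => gram_col rG v g s)).
Qed.

Lemma orth_to_gram_colspace v z :
  (forall h, L2dot z (gram_col rG v h) = 0) -> orth_to (gram_colspace rG v) z.
Proof.
move=> z_orth _ [c ->].
transitivity (\sum_h (c h)^* * L2dot z (gram_col rG v h)).
  rewrite /L2dot; under eq_bigr => x _ do rewrite ffunE rmorph_sum mulr_sumr.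
  rewrite exchange_big; apply: eq_bigr => h _; rewrite mulr_sumr.
  by apply: eq_bigr => x _; rewrite rmorphM /= mulrCA.
by rewrite big1 // => h _; rewrite z_orth mulr0.
Qed.

Lemma gram_projE v f :
  gram_proj v f = [ffun g => \sum_h ((N * Hdot v v)^-1 * f h) * gram_col rG v h g].
Proof.
apply/ffunP => g; rewrite !ffunE mulr_sumr.
by apply: eq_bigr => h _; rewrite ffunE mulrA.
Qed.

Hypothesis rG_irr : mx_irreducible rG.

Lemma repr_degree_gt0 : (0 < d)%N.
Proof. by have [] := (mx_irrP rG).1 rG_irr. Qed.

Lemma natr_degree_neq0 : (d%:R : algC) != 0.
Proof. by rewrite pnatr_eq0 -lt0n repr_degree_gt0. Qed.

Lemma schur_const_neq0 : N != 0.
Proof. by rewrite mulf_neq0 ?invr_eq0 ?natr_card_neq0 ?natr_degree_neq0. Qed.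

Lemma sum_conj_repr_scalar X :
  \sum_g rG g^-1%g *m X *m rG g = (N * \tr X)%:M.
Proof.
(* The sum commutes with rG, hence is scalar by Schur's lemma over algC. *)
have absG : mx_absolutely_irreducible rG.
  exact: (@group_closure_closed_field algC gT [set: gT]%G d rG rG_irr).
set Z := \sum_g _.
have cZ : centgmx rG Z.
  apply/centgmxP => x _; rewrite mulmx_suml mulmx_sumr.
  rewrite [RHS](reindex_inj (mulIg x)) /=; apply: eq_bigr => g _.
  by rewrite !reprM invMg !mulmxA -reprM mulgA mulgV mul1g.
have /is_scalar_mxP [a Za] := mx_abs_irr_cent_scalar absG cZ.
have trZ : \tr Z = #|gT|%:R * \tr X.
  rewrite raddf_sum /= (eq_bigr (fun _ => \tr X)) ?sumr_const ?mulr_natl // => g _.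
  by rewrite mxtrace_mulC mulmxA -reprM mulgV repr_mx1 mul1mx.
rewrite Za mxtrace_scalar in trZ.
rewrite Za; congr (_%:M); apply: (mulfI natr_degree_neq0).
by rewrite [LHS]mulr_natl trZ; field; rewrite natr_degree_neq0.
Qed.

Lemma schur_orthogonality_entries (k j i l : 'I_d) :
  \sum_x rG x^-1%g k j * rG x i l = (k == l)%:R * ((j == i)%:R * N).
Proof.
have /matrixP/(_ k l) := sum_conj_repr_scalar (delta_mx j i).
rewrite summxE mxtrace_delta mxE => sumE.
rewrite (eq_bigr _ (fun x _ => esym (mul_delta_mx_entry _ _ j i k l))) sumE.
by case: (k == l); rewrite ?mulr1n ?mulr0n ?mul1r ?mul0r // mulrC.
Qed.

Lemma sum_trace_repr_scale Y : \sum_x \tr (rG x^-1%g *m Y) *: rG x = N *: Y.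
Proof.
apply/matrixP => i l; rewrite summxE mxE.
transitivity (\sum_k \sum_j Y j k * \sum_x rG x^-1%g k j * rG x i l).
  under eq_bigr => x _ do rewrite mxE /mxtrace mulr_suml.
  rewrite exchange_big; apply: eq_bigr => k _.
  under eq_bigr => x _ do rewrite mxE mulr_suml.
  rewrite exchange_big; apply: eq_bigr => j _; rewrite mulr_sumr.
  by apply: eq_bigr => x _; rewrite mulrCA mulrA.
under eq_bigr => k _ do under eq_bigr => j _ do
  rewrite schur_orthogonality_entries mulrCA.
under eq_bigr => k _ do rewrite -mulr_sumr.
rewrite (sumr_delta _ (fun k => \sum_j Y j k * _)).
under eq_bigr => j _ do rewrite mulrCA.
by rewrite (sumr_delta _ (fun j => Y j l * _)) mulrC.
Qed.

Lemma sum_trace_repr_mul Y W :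
  \sum_x \tr (rG x^-1%g *m Y) * \tr (rG x *m W) = N * \tr (Y *m W).
Proof.
under eq_bigr => x _ do rewrite -mxtraceZ scalemxAl.
by rewrite -raddf_sum /= -mulmx_suml sum_trace_repr_scale -scalemxAl mxtraceZ.
Qed.

Lemma schur_orthogonality x y u v :
  \sum_g Hdot x (rG g *m v) * (Hdot y (rG g *m u))^* = N * Hdot x y * Hdot u v.
Proof.
under eq_bigr => g _ do rewrite conj_Hdot Hdot_reprE HdotE -mulmxA.
rewrite sum_trace_repr_mul -mulrA; congr (_ * _).
rewrite mulmxA -(mulmxA x) [_ *m u]mx11_scalar mul_mx_scalar -scalemxAl mxtraceZ.
rewrite -HdotE mulrC; congr (_ * _).
by rewrite HdotE mxtrace_mulC /mxtrace big_ord1.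
Qed.

Lemma conj_rchar g : (rchar rG g)^* = rchar rG g^-1%g.
Proof. by rewrite /rchar -repr_adjoint trace_map_mx mxtrace_tr. Qed.

Lemma sum_Hdot_conj_rchar z v s a :
  \sum_x Hdot z (rG x *m v) * (rchar rG (x^-1 * s * a)%g)^*
    = N * Hdot z (rG (s * a)%g *m v).
Proof.
under eq_bigr => x _ do rewrite Hdot_reprE conj_rchar /rchar !invMg invgK
  mulgA reprM -invMg [\tr (_ *m rG x)]mxtrace_mulC.
by rewrite sum_trace_repr_mul Hdot_reprE mxtrace_mulC.
Qed.

Lemma L2dot_gram_col v (F : L2 gT) h : L2dot F (gram_col rG v h) = cross v v F h.
Proof. by rewrite ffunE; apply: eq_bigr => g _; rewrite ffunE conj_Hdot. Qed.

Lemma crossZ v w k (F : L2 gT) :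
  cross v w [ffun s => k * F s] = [ffun g => k * cross v w F g].
Proof.
apply/ffunP => g; rewrite !ffunE mulr_sumr.
by apply: eq_bigr => h _; rewrite ffunE mulrA.
Qed.

Lemma cross_cross v u w f :
  cross w w (cross v u f) = [ffun g => N * Hdot w u * cross v w f g].
Proof.
apply/ffunP => g; rewrite ffunE.
under eq_bigr => s _ do rewrite ffunE mulr_suml.
rewrite exchange_big ffunE ffunE mulr_sumr; apply: eq_bigr => h _.
transitivity (f h * \sum_s Hdot (rG h *m v) (rG s *m u) * (Hdot (rG g *m w) (rG s *m w))^*).
  by rewrite mulr_sumr; apply: eq_bigr => s _; rewrite conj_Hdot mulrA.
by rewrite schur_orthogonality; ring.
Qed.

Section GramProjection.
Variable v : 'cV[algC]_d.
Hypothesis v_neq0 : v != 0.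

Lemma cross_gram_proj f : cross v v (gram_proj v f) = cross v v f.
Proof.
apply/ffunP => g; rewrite crossZ cross_cross !ffunE mulKf //.
by rewrite mulf_neq0 ?schur_const_neq0 ?Hdot_neq0.
Qed.

Lemma orthproj_gram f : orthproj (gram_colspace rG v) f = gram_proj v f.
Proof.
apply: orthproj_unique; first exact: gram_colspaceB.
split.
  exists (fun h => (N * Hdot v v)^-1 * f h).
  by rewrite gram_projE; apply/ffunP => g; rewrite !ffunE.
apply: orth_to_gram_colspace => h.
by rewrite L2dotBl !L2dot_gram_col cross_gram_proj subrr.
Qed.

Lemma gram_proj_id f : gram_colspace rG v f -> gram_proj v f = f.
Proof.
by move=> Vf; rewrite -orthproj_gram orthproj_id //; apply: gram_colspaceB.
Qed.

Lemma Achi_gram_proj f a :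
  Achi (rchar rG) a (gram_proj v f)
    = [ffun s => (Hdot v v)^-1 * cross v (rG a *m v) f s].
Proof.
apply/ffunP => s; rewrite !ffunE; set c := (N * Hdot v v)^-1.
transitivity (c * \sum_h f h *
    \sum_x Hdot (rG h *m v) (rG x *m v) * (rchar rG (x^-1 * s * a)%g)^*).
  under eq_bigr => x _ do rewrite !ffunE -/c [c * _]mulr_sumr mulr_suml.
  rewrite exchange_big [c * _]mulr_sumr; apply: eq_bigr => h _.
  by rewrite [f h * _]mulr_sumr [c * _]mulr_sumr; apply: eq_bigr => x _; ring.
under eq_bigr => h _ do rewrite sum_Hdot_conj_rchar reprM -mulmxA.
rewrite [c * _]mulr_sumr [_^-1 * _]mulr_sumr; apply: eq_bigr => h _.
by rewrite /c; field; rewrite Hdot_neq0 // natr_degree_neq0 natr_card_neq0.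
Qed.

End GramProjection.

Lemma orthproj_Achi_orthproj v w f a : v != 0 -> w != 0 ->
  orthproj (gram_colspace rG w)
    (Achi (rchar rG) a (orthproj (gram_colspace rG v) f))
  = [ffun g => Hdot w (rG a *m v) / (Hdot v v * Hdot w w) * cross v w f g].
Proof.
move=> v_neq0 w_neq0; apply/ffunP => g.
rewrite !orthproj_gram // Achi_gram_proj // ffunE crossZ cross_cross !ffunE.
by field; rewrite !Hdot_neq0 // natr_degree_neq0 natr_card_neq0.
Qed.

Lemma exists_Hdot_repr_neq0 v w : v != 0 -> w != 0 ->
  exists a, Hdot w (rG a *m v) != 0.
Proof.
move=> v_neq0 w_neq0.
have := mulf_neq0 (mulf_neq0 schur_const_neq0 (Hdot_neq0 w_neq0)) (Hdot_neq0 v_neq0).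
rewrite -schur_orthogonality.
case: (boolP [exists a, Hdot w (rG a *m v) != 0]) => [/existsP //|/existsPn all0].
by rewrite big1 ?eqxx // => a _; move/negPn/eqP: (all0 a) => ->; rewrite mul0r.
Qed.

Section Intertwiner.
Variables (v1 v2 : 'cV[algC]_d) (M : L2 gT -> L2 gT).
Hypothesis v1_neq0 : v1 != 0.
Hypothesis M_linear : forall c (f f' : L2 gT),
  M [ffun x => c * f x + f' x] = [ffun x => c * M f x + M f' x].
Hypothesis M_maps : forall f, gram_colspace rG v1 f -> gram_colspace rG v2 (M f).
Hypothesis M_isometry : forall f f', gram_colspace rG v1 f -> gram_colspace rG v1 f' ->
  L2dot (M f) (M f') = L2dot f f'.
Hypothesis M_zero_orth : forall f, orth_to (gram_colspace rG v1) f -> M f = [ffun => 0].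
Hypothesis M_Glinear : forall g f, M (lreg g f) = lreg g (M f).

Lemma intertwiner_gram_proj f : M f = M (gram_proj v1 f).
Proof.
have orth : orth_to (gram_colspace rG v1) [ffun x => f x - gram_proj v1 f x].
  apply: orth_to_gram_colspace => h.
  by rewrite L2dotBl !L2dot_gram_col (cross_gram_proj v1_neq0) subrr.
have fE : f = [ffun x => 1 * gram_proj v1 f x + [ffun x => f x - gram_proj v1 f x] x].
  by apply/ffunP => x; rewrite !ffunE mul1r addrC subrK.
by rewrite {1}fE M_linear (M_zero_orth orth); apply/ffunP => x; rewrite !ffunE mul1r addr0.
Qed.

Lemma intertwiner_gram_col : exists2 mu : algC, mu != 0 &
  forall h, M (gram_col rG v1 h) = [ffun s => mu * Hdot (rG h *m v1) (rG s *m v2)].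
Proof.
have Ve := gram_colspace_gram_col v1 1%g.
have [u Meu] := gram_colspace_mxcoef (M_maps Ve).
have lreg_e h : lreg h (gram_col rG v1 1) = gram_col rG v1 h.
  by rewrite gram_col_mxcoef lreg_mxcoef repr_mx1 mul1mx.
have M_col_u h : M (gram_col rG v1 h) = mxcoef v2 (rG h *m u).
  by rewrite -lreg_e M_Glinear Meu lreg_mxcoef.
pose mu := Hdot u v1 / Hdot v1 v1.
have Me : M (gram_col rG v1 1) = [ffun s => mu * Hdot v1 (rG s *m v2)].
  rewrite -{1}(gram_proj_id v1_neq0 Ve) gram_projE linear_ffun_sum //.
  apply/ffunP => s; rewrite !ffunE.
  transitivity ((N * Hdot v1 v1)^-1 *
      \sum_h Hdot v1 (rG h *m v1) * (Hdot (rG s *m v2) (rG h *m u))^*).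
    rewrite [_^-1 * _]mulr_sumr; apply: eq_bigr => h _.
    by rewrite M_col_u !ffunE repr_mx1 mul1mx conj_Hdot mulrA.
  rewrite schur_orthogonality /mu.
  by field; rewrite Hdot_neq0 // natr_degree_neq0 natr_card_neq0.
have e_neq0 : gram_col rG v1 1 != [ffun => 0].
  apply/eqP => /ffunP/(_ 1%g); rewrite !ffunE repr_mx1 mul1mx.
  by move/eqP; apply/negP/Hdot_neq0.
exists mu.
  apply: contra e_neq0 => /eqP mu0; apply/eqP/L2dot_eq0.
  rewrite -M_isometry // Me mu0 /L2dot big1 // => x _.
  by rewrite !ffunE !mul0r.
move=> h; rewrite -lreg_e M_Glinear Me; apply/ffunP => s.
by rewrite lregE !ffunE reprM -mulmxA Hdot_repr_adjoint.
Qed.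

Lemma intertwiner_cross : exists2 mu : algC, mu != 0 &
  forall f, M f = [ffun g => mu / (N * Hdot v1 v1) * cross v1 v2 f g].
Proof.
have [mu mu_neq0 M_col] := intertwiner_gram_col.
exists mu => // f; rewrite intertwiner_gram_proj gram_projE linear_ffun_sum //.
apply/ffunP => g; rewrite !ffunE mulr_sumr; apply: eq_bigr => h _.
by rewrite M_col ffunE; ring.
Qed.

End Intertwiner.

End Representation.

Theorem mainTheorem4 (gT : finGroupType) (d : nat)
  (rG : mx_representation algC [set: gT] d)
  (rG_unitary : forall g : gT, rG g \is unitarymx)
  (rG_irr : mx_irreducible rG)
  (v1 v2 : 'cV[algC]_d) (v1_neq0 : v1 != 0) (v2_neq0 : v2 != 0)
  (M : L2 gT -> L2 gT)
  (M_linear : forall (c : algC) (f h : L2 gT),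
      M [ffun x => c * f x + h x] = [ffun x => c * M f x + M h x])
  (M_maps : forall f, gram_colspace rG v1 f -> gram_colspace rG v2 (M f))
  (M_onto : forall h, gram_colspace rG v2 h ->
      exists f, gram_colspace rG v1 f /\ M f = h)
  (M_isometry : forall f h, gram_colspace rG v1 f -> gram_colspace rG v1 h ->
      L2dot (M f) (M h) = L2dot f h)
  (M_zero_orth : forall f, orth_to (gram_colspace rG v1) f -> M f = [ffun => 0])
  (M_Glinear : forall (g : gT) (f : L2 gT), M (lreg g f) = lreg g (M f)) :
  exists lam : gT -> algC,
    (forall (a : gT) (f : L2 gT),
       [ffun x => lam a * M f x] =
       orthproj (gram_colspace rG v2)
         (Achi (rchar rG) a (orthproj (gram_colspace rG v1) f)))
    /\ exists a : gT, lam a != 0.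
Proof.
have [mu mu_neq0 ME] := intertwiner_cross rG_unitary rG_irr v1_neq0
  M_linear M_maps M_isometry M_zero_orth M_Glinear.
exists (fun a => #|gT|%:R / d%:R * Hdot v2 (rG a *m v1) / (Hdot v2 v2 * mu)).
split=> [a f|].
  rewrite (orthproj_Achi_orthproj rG_unitary rG_irr) // ME.
  apply/ffunP => g; rewrite !ffunE.
  by field; rewrite !Hdot_neq0 // mu_neq0 (natr_degree_neq0 rG_irr) natr_card_neq0.
have [a Ha] := exists_Hdot_repr_neq0 rG_unitary rG_irr v1_neq0 v2_neq0.
exists a; apply: mulf_neq0; first exact: mulf_neq0 (schur_const_neq0 rG_irr) Ha.
by rewrite invr_eq0 (mulf_neq0 (Hdot_neq0 v2_neq0) mu_neq0).
Qed.
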